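(* Let $S$ be a species tree, let $(T,\sigma)$ be a gene tree that is binary (every inner vertex of $T$ other than the planted root $0_T$ has exactly two children), and let $\mu:V(T)\to V(S)\cup E(S)$ be a reconciliation map without horizontal gene transfer satisfying axioms (R0), (R1), (R2), (R3.i), (R3.ii) (but not necessarily (R4)). Let $x,y\in L(T)$ be two genes with $\sigma(x)\neq\sigma(y)$. If $\operatorname{lca}_S(\sigma(x),\sigma(y))\prec_S \mu(\operatorname{lca}_T(x,y))$, then $\operatorname{lca}_T(x,y)$ is a duplication event, i.e., $\mu(\operatorname{lca}_T(x,y))\in E(S)$.
   Context: A planted phylogenetic tree $T$ has a distinguished leaf $0_T$ (the planted root) whose unique neighbour $\rho_T$ is the root; every other non-leaf vertex has at least two children. $L(T)$ denotes the leaves other than $0_T$. For vertices, $a\preceq_T b$ means $b$ lies on the path from $a$ to $0_T$; $\operatorname{lca}_T(A)$ is the $\preceq_T$-minimal vertex that is $\succeq_T$ every element of $A$; $T(v)$ is the subtree rooted at $v$ and $\mathsf{child}(v)$ the set of children of $v$. A species tree $S$ is a planted phylogenetic tree with planted root $0_S$, root $\rho_S$ and leaf set $\mathscr{S}$ (the species); $V^0(S)$ denotes the inner vertices of $S$ (vertices that are neither leaves nor $0_S$). The order $\preceq_S$ is extended to $V(S)\cup E(S)$ by regarding each edge $e=pq$ ($q$ a child of $p$) as lying strictly between $q$ and $p$: $q\prec_S e\prec_S p$, a vertex $w$ satisfies $w\prec_S e$ iff $w\preceq_S q$ and $e\prec_S w$ iff $p\preceq_S w$, and for edges $e=pq$,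 $e'=p'q'$, $e\prec_S e'$ iff $p\preceq_S q'$; $\operatorname{lca}_S$ of elements of $V(S)\cup E(S)$ is the $\preceq_S$-minimal vertex above all of them. A gene tree $(T,\sigma)$ is a planted phylogenetic tree $T$ with a map $\sigma:L(T)\to\mathscr{S}$ assigning to each gene its species. A reconciliation map without horizontal gene transfer is a map $\mu:V(T)\to V(S)\cup E(S)$ satisfying: (R0) $\mu(v)=0_S$ iff $v=0_T$; (R1) $\mu(v)=\sigma(v)$ for $v\in L(T)$; (R2) $v\prec_T w$ implies $\mu(v)\preceq_S\mu(w)$; and for every $v\in V(T)$ with $\mu(v)\in V^0(S)$: (R3.i) $\mu(v)=\operatorname{lca}_S(\mu(v'),\mu(v''))$ for at least two distinct children $v',v''$ of $v$, and (R3.ii) $\mu(v')$ and $\mu(v'')$ are $\preceq_S$-incomparable for any two distinct children $v',v''$ of $v$. A vertex $v$ of $T$ is a speciation if $\mu(v)\in V^0(S)$ and a duplication if $\mu(v)\in E(S)$. *)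

From mathcomp Require Import all_boot.
Set Implicit Arguments. Unset Strict Implicit. Unset Printing Implicit Defensive.

(* A planted tree on a finite vertex type V is given by its planted root v0
   and a parent map par (par v0 = v0). *)
Section Trees.
Variables (V : finType) (v0 : V) (par : V -> V).

Definition child (v c : V) : bool := (par c == v) && (c != v0).
Definition children (v : V) : {set V} := [set c | child v c].
Definition leaf (v : V) : bool := (v != v0) && (children v == set0).
Definition inner (v : V) : bool := (v != v0) && ~~ leaf v.

(* a ⪯ b : b lies on the path from a to v0 *)
Definition anc (a b : V) : Prop := exists n, iter n par a = b.
Definition sanc (a b : V) : Prop := anc a b /\ a <> b.

Definition planted_phylo : Prop :=
  [/\ par v0 = v0,
      (forall v, anc v v0),
      #|children v0| = 1 &
      (forall v, v != v0 -> #|children v| != 1)].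

Definition binary_tree : Prop :=
  forall v, v != v0 -> (#|children v| == 0) || (#|children v| == 2).

Definition is_lca (a b w : V) : Prop :=
  anc a w /\ anc b w /\ forall w', anc a w' -> anc b w' -> anc w w'.

(* Elements of V(S) ∪ E(S): a vertex, or an edge (par q, q) represented by
   its lower endpoint q <> v0. *)
Definition elem := (V + {q : V | q != v0})%type.

Definition elt (a b : elem) : Prop :=
  match a, b with
  | inl w, inl v => sanc w v
  | inl w, inr e => anc w (val e)
  | inr e, inl w => anc (par (val e)) w
  | inr e, inr e' => anc (par (val e)) (val e')
  end.
Definition ele (a b : elem) : Prop := a = b \/ elt a b.
Definition incomparable (a b : elem) : Prop := ~ ele a b /\ ~ ele b a.

Definition is_elca (a b : elem) (w : V) : Prop :=
  ele a (inl w) /\ ele b (inl w) /\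
  forall w', ele a (inl w') -> ele b (inl w') -> anc w w'.

End Trees.

Definition reconciliation (VT VS : finType) (t0 : VT) (parT : VT -> VT)
    (s0 : VS) (parS : VS -> VS) (sigma : VT -> VS)
    (mu : VT -> elem s0) : Prop :=
  [/\ (forall v, mu v = inl s0 <-> v = t0),
      (forall v, leaf t0 parT v -> mu v = inl (sigma v)),
      (forall v w, sanc parT v w -> ele parS (mu v) (mu w)) &
      (forall v w, mu v = inl w -> inner s0 parS w ->
         (exists v' v'', [/\ child t0 parT v v', child t0 parT v v'', v' <> v''
                            & is_elca parS (mu v') (mu v'') w]) /\
         (forall v' v'', child t0 parT v v' -> child t0 parT v v'' -> v' <> v'' ->
            incomparable parS (mu v') (mu v'')))].

From mathcomp Require Import all_boot.
Set Implicit Arguments. Unset Strict Implicit. Unset Printing Implicit Defensive.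

(* Suppose mu(u) were a vertex v of S with w := lca_S(sigma x, sigma y) strictly
   below v. Then v is an inner vertex, so by (R3) the two children c1 >= x and
   c2 >= y of the binary vertex u satisfy v = lca_S(mu c1, mu c2), with mu c1 and
   mu c2 incomparable. Now mu c1 and w both lie above sigma x, so they are
   comparable; likewise mu c2 and w. If both mu c1 and mu c2 are below w then
   v is below w, which is absurd; otherwise one of them is above w and hence
   comparable with the other, contradicting (R3.ii). *)

Section Ancestry.
Variables (V : finType) (par : V -> V).

Lemma anc_refl a : anc par a a.
Proof. by exists 0. Qed.

Lemma anc_trans a b c : anc par a b -> anc par b c -> anc par a c.
Proof. by move=> [n <-] [m <-]; exists (m + n); rewrite iterD. Qed.

Lemma anc_par a : anc par a (par a).
Proof. by exists 1. Qed.

Lemma anc_parent a b : anc par a b -> a <> b -> anc par (par a) b.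
Proof. by move=> [[|n] <-] // _; exists n; rewrite iterSr. Qed.

Lemma anc_total s a b : anc par s a -> anc par s b -> anc par a b \/ anc par b a.
Proof.
move=> [n <-] [m <-]; case: (leqP n m) => [le_nm | /ltnW le_mn].
- by left; exists (m - n); rewrite -iterD subnK.
- by right; exists (n - m); rewrite -iterD subnK.
Qed.

Lemma iter_periodic a p k : iter p par a = a -> iter (k * p) par a = a.
Proof. by move=> per; elim: k => // k IHk; rewrite mulSn iterD IHk per. Qed.

End Ancestry.

Section Elements.
Variables (V : finType) (v0 : V) (par : V -> V).

Definition foot (a : elem v0) : V := match a with inl p => p | inr q => val q end.

Lemma ele_inl p q : ele par (inl p) (inl q : elem v0) <-> anc par p q.
Proof.
split=> [[[->] | []] // | pq]; first exact: anc_refl.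
by case: (eqVneq p q) => [-> | /eqP ne_pq]; [left | right].
Qed.

Lemma anc_foot_of_ele s (a : elem v0) : ele par (inl s) a -> anc par s (foot a).
Proof. by case: a => [p /ele_inl | q [| sq]]. Qed.

Lemma ele_trans_inl (a b : elem v0) w :
  ele par a (inl w) -> ele par (inl w) b -> ele par a b.
Proof.
case: a => [p|p]; case: b => [q|q] /=.
- by move=> /ele_inl aw /ele_inl wb; apply/ele_inl; apply: anc_trans aw wb.
- by move=> /ele_inl aw [// | wb]; right; apply: anc_trans aw wb.
- by move=> [// | aw] /ele_inl wb; right; apply: anc_trans aw wb.
- by move=> [// | aw] [// | wb]; right; apply: anc_trans aw wb.
Qed.

Lemma ele_total_of_anc_foot (a b : elem v0) :
  anc par (foot a) (foot b) -> ele par a b \/ ele par b a.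
Proof.
case: a => [p|p]; case: b => [q|q] /= ab.
- by left; apply/ele_inl.
- by left; right.
- case: (eqVneq (val p) q) => [<- | /eqP ne]; first by right; right; apply: anc_refl.
  by left; right => /=; apply: anc_parent.
- case: (eqVneq p q) => [-> | /eqP ne]; first by left; left.
  by left; right => /=; apply: (anc_parent ab) => /val_inj.
Qed.

Lemma ele_total s (a b : elem v0) :
  ele par (inl s) a -> ele par (inl s) b -> ele par a b \/ ele par b a.
Proof.
move=> /anc_foot_of_ele sa /anc_foot_of_ele sb.
by case: (anc_total sa sb) => /ele_total_of_anc_foot [] ?; [left | right | right | left].
Qed.

Lemma elca_sym (a b : elem v0) w : is_elca par a b w -> is_elca par b a w.
Proof. by move=> [aw [bw wmin]]; split=> //; split=> // w' bw' aw'; apply: wmin. Qed.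

Lemma elca_anc_of_incomparable (a1 a2 : elem v0) s1 s2 w v :
  incomparable par a1 a2 -> is_elca par a1 a2 v ->
  ele par (inl s1) a1 -> ele par (inl s2) a2 ->
  anc par s1 w -> anc par s2 w -> anc par v w.
Proof.
move=> [not12 not21] [_ [_ vmin]] s1a1 s2a2 /ele_inl s1w /ele_inl s2w.
have [a1w | wa1] := ele_total s1a1 s1w; have [a2w | wa2] := ele_total s2a2 s2w.
- exact: vmin.
- by case: not12; apply: ele_trans_inl a1w wa2.
- by case: not21; apply: ele_trans_inl a2w wa1.
- by case: (ele_total wa1 wa2).
Qed.

End Elements.

Section PlantedTree.
Variables (V : finType) (v0 : V) (par : V -> V).
Hypotheses (par_v0 : par v0 = v0) (anc_v0 : forall v, anc par v v0).

Lemma iter_par_v0 n : iter n par v0 = v0.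
Proof. by elim: n => //= n ->. Qed.

(* A cycle through a returns to a infinitely often, while the iterates of a
   eventually stay at v0. *)
Lemma anc_antisym a b : anc par a b -> anc par b a -> a = b.
Proof.
move=> [n an_b] [m bm_a].
have cyc : iter (m + n) par a = a by rewrite iterD an_b bm_a.
have [N aN] := anc_v0 a.
case: (posnP (m + n)) => [/eqP | mn_gt0].
  by rewrite addn_eq0 => /andP[_ /eqP n0]; rewrite -an_b n0.
have le_N : N <= N * (m + n) by rewrite leq_pmulr.
have a_v0 : a = v0.
  by have := iter_periodic N cyc; rewrite -(subnK le_N) iterD aN iter_par_v0.
by rewrite -an_b a_v0 iter_par_v0.
Qed.

Lemma par_fixed_root a : par a = a -> a = v0.
Proof.
move=> pa; have [n <-] := anc_v0 a.
by elim: n => //= n <-; rewrite pa.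
Qed.

Lemma anc_child_below a b :
  anc par a b -> a <> b -> b <> v0 -> exists2 c, child v0 par b c & anc par a c.
Proof.
move=> [[|n] <-] // _ b_v0; exists (iter n par a); last by exists n.
rewrite /child eqxx /=; apply/eqP => c_v0.
by apply: b_v0; rewrite /= c_v0.
Qed.

Lemma leaf_anc_eq a b : leaf v0 par a -> anc par b a -> b = a.
Proof.
move=> /andP[/eqP a_v0 /eqP no_child] ba; apply/eqP/negPn/negP => /eqP ne.
have [c ac _] := anc_child_below ba ne a_v0.
have : c \in children v0 par a by rewrite inE.
by rewrite no_child inE.
Qed.

Lemma inner_of_sanc w v : sanc par w v -> v <> v0 -> inner v0 par v.
Proof.
move=> [wv ne] v_v0; have [c vc _] := anc_child_below wv ne v_v0.
rewrite /inner /leaf negb_and; apply/andP; split; first exact/eqP.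
by apply/orP; right; apply/set0Pn; exists c; rewrite inE.
Qed.

Lemma anc_root_child a : a <> v0 -> exists2 c, child v0 par v0 c & anc par a c.
Proof.
have [n] := anc_v0 a; elim: n a => [|n IHn] a; first by move=> /= ->.
rewrite iterSr => pa_n a_v0; case: (eqVneq (par a) v0) => [pa | /eqP pa_v0].
  by exists a; [rewrite /child pa eqxx; apply/eqP | apply: anc_refl].
have [c v0c pac] := IHn _ pa_n pa_v0.
by exists c => //; apply: anc_trans (anc_par _ a) pac.
Qed.

Lemma lca_neq_root a b u :
  #|children v0 par v0| = 1 -> a <> v0 -> b <> v0 -> is_lca par a b u -> u <> v0.
Proof.
move=> /eqP/cards1P[rho root_children] a_v0 b_v0 [_ [_ umin]] u_v0.
have [ca v0ca aca] := anc_root_child a_v0.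
have [cb v0cb bcb] := anc_root_child b_v0.
have in_rho c : child v0 par v0 c -> c = rho.
  by move=> v0c; apply/set1P; rewrite -root_children inE.
move: bcb; rewrite (in_rho _ v0cb) -(in_rho _ v0ca) => bca.
have ca_v0 : ca = v0 by apply: (anc_antisym (anc_v0 ca)); rewrite -u_v0; apply: umin.
by move: v0ca; rewrite /child ca_v0 eqxx andbF.
Qed.

Lemma lca_leaves_children a b u :
  leaf v0 par a -> leaf v0 par b -> a <> b -> is_lca par a b u -> u <> v0 ->
  exists c1 c2, [/\ child v0 par u c1, child v0 par u c2, c1 <> c2,
                    anc par a c1 & anc par b c2].
Proof.
move=> la lb ab [au [bu umin]] u_v0.
have a_u : a <> u by move=> e; apply: ab; symmetry; apply: (leaf_anc_eq la); rewrite e.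
have b_u : b <> u by move=> e; apply: ab; apply: (leaf_anc_eq lb); rewrite e.
have [c1 uc1 ac1] := anc_child_below au a_u u_v0.
have [c2 uc2 bc2] := anc_child_below bu b_u u_v0.
exists c1, c2; split=> // c12; rewrite -c12 in bc2.
have pc1 : par c1 = u by case/andP: uc1 => /eqP.
have u_c1 : u = c1 by apply: (anc_antisym (umin _ ac1 bc2)); rewrite -pc1; apply: anc_par.
by apply: u_v0; apply: par_fixed_root; rewrite -{2}pc1 u_c1.
Qed.

End PlantedTree.

Lemma binary_children_pair (V : finType) (v0 : V) (par : V -> V) u c1 c2 d1 d2 :
  binary_tree v0 par -> u <> v0 ->
  child v0 par u c1 -> child v0 par u c2 -> c1 <> c2 ->
  child v0 par u d1 -> child v0 par u d2 -> d1 <> d2 ->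
  (d1 = c1 /\ d2 = c2) \/ (d1 = c2 /\ d2 = c1).
Proof.
move=> bin /eqP u_v0 uc1 uc2 /eqP c12 ud1 ud2.
have c1_in : c1 \in children v0 par u by rewrite inE.
have card2 : #|children v0 par u| = 2.
  have /orP[/eqP card0 | /eqP //] := bin u u_v0.
  by move: c1_in; rewrite (cards0_eq card0) inE.
have children_u : children v0 par u = [set c1; c2].
  apply/eqP; rewrite eq_sym eqEcard subUset !sub1set !inE uc1 uc2.
  by rewrite cards2 card2 c12.
have : d1 \in children v0 par u by rewrite inE.
have : d2 \in children v0 par u by rewrite inE.
rewrite children_u => /set2P[] -> /set2P[] -> d12; by [left | right | case: d12].
Qed.

Lemma reconciliation_ele_of_anc (VT VS : finType) (t0 : VT) (parT : VT -> VT)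
    (s0 : VS) (parS : VS -> VS) (sigma : VT -> VS) (mu : VT -> elem s0) a b :
  reconciliation t0 parT parS sigma mu -> anc parT a b -> ele parS (mu a) (mu b).
Proof.
move=> [_ _ R2 _] ab; case: (eqVneq a b) => [-> | /eqP ne]; first by left.
exact: R2.
Qed.

Theorem lemma2 (VS : finType) (s0 : VS) (parS : VS -> VS)
    (VT : finType) (t0 : VT) (parT : VT -> VT)
    (sigma : VT -> VS) (mu : VT -> elem s0) :
  planted_phylo s0 parS ->
  planted_phylo t0 parT ->
  binary_tree t0 parT ->
  (forall v, leaf t0 parT v -> leaf s0 parS (sigma v)) ->
  reconciliation t0 parT parS sigma mu ->
  forall (x y : VT) (u : VT) (w : VS),
    leaf t0 parT x -> leaf t0 parT y -> sigma x <> sigma y ->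
    is_lca parT x y u ->
    is_lca parS (sigma x) (sigma y) w ->
    elt parS (inl w) (mu u) ->
    exists e, mu u = inr e.
Proof.
move=> [pS_s0 anc_s0 _ _] [pT_t0 anc_t0 root_t0 _] bin _ rec
  x y u w lx ly sxy u_lca [sx_w [sy_w _]] w_mu.
case mu_u: (mu u) => [v|e]; last by exists e.
exfalso; rewrite mu_u in w_mu; have [R0 R1 _ R3] := rec.
have xy : x <> y by move=> e; apply: sxy; rewrite e.
have [x_t0 y_t0] : x <> t0 /\ y <> t0 by case/andP: lx => /eqP; case/andP: ly => /eqP.
have u_t0 := lca_neq_root pT_t0 anc_t0 root_t0 x_t0 y_t0 u_lca.
have v_s0 : v <> s0 by move=> v_s0; apply: u_t0; apply/R0; rewrite mu_u v_s0.
have [[v' [v'' [uv' uv'' v'v'' v_lca]]] incomp] :=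
  R3 u v mu_u (inner_of_sanc pS_s0 w_mu v_s0).
have [c1 [c2 [uc1 uc2 c12 xc1 yc2]]] :=
  lca_leaves_children pT_t0 anc_t0 lx ly xy u_lca u_t0.
have c_lca : is_elca parS (mu c1) (mu c2) v.
  move: v_lca; case: (binary_children_pair bin u_t0 uc1 uc2 c12 uv' uv'' v'v'');
    by case=> -> -> //; apply: elca_sym.
have sx_c1 : ele parS (inl (sigma x)) (mu c1).
  by rewrite -(R1 _ lx); apply: reconciliation_ele_of_anc rec xc1.
have sy_c2 : ele parS (inl (sigma y)) (mu c2).
  by rewrite -(R1 _ ly); apply: reconciliation_ele_of_anc rec yc2.
have v_w := elca_anc_of_incomparable (incomp _ _ uc1 uc2 c12) c_lca
  sx_c1 sy_c2 sx_w sy_w.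
by case: w_mu => w_v; apply; apply: (anc_antisym pS_s0 anc_s0 w_v v_w).
Qed.
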